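(* For all integers $m,n\geq 1$, \[p^{ed}_{od}(2m,2n)=p^{ed}_{od}(2m,2n-1).\]
   Context: $\mathcal{P}^{ed}_{od}$ is the set of integer partitions such that: - all parts are distinct; - every odd part is smaller than every even part; - at least one odd part appears. $p^{ed}_{od}(m,n)$ is the number of partitions of $n$ in $\mathcal{P}^{ed}_{od}$ with exactly $m$ parts. *)

From mathcomp Require Import all_boot.
Set Implicit Arguments. Unset Strict Implicit. Unset Printing Implicit Defensive.

(* A partition of n into DISTINCT parts is identified with its (finite) set of
   parts, a set of positive integers summing to n. All parts are <= n, so the
   set lives in {set 'I_n.+1}. *)

Definition in_Ped_od (n : nat) (A : {set 'I_n.+1}) : bool :=
  [&& (ord0 \notin A),
      [forall i in A, forall j in A, (odd i && ~~ odd j) ==> (i < j)] &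
      [exists i in A, odd i]].

Definition p_ed_od (m n : nat) : nat :=
  #|[set A : {set 'I_n.+1} | [&& in_Ped_od A, #|A| == m & \sum_(i in A) (i : nat) == n]]|.

From mathcomp Require Import all_boot.
From mathcomp Require Import zify.
Set Implicit Arguments. Unset Strict Implicit. Unset Printing Implicit Defensive.

(* Lowering the largest odd part x by one turns a partition
   of 2n into one of 2n - 1 with the same number of parts: since the sum is even,
   there is another odd part o < x - 1, and x - 1 becomes the new smallest even
   part.  Conversely, a partition of the odd number 2n - 1 into an even number of
   parts has an even part, and raising its smallest even part y by one produces the
   new largest odd part y + 1.  The two operations are mutually inverse. *)

Definition ped_set (K M s : nat) (A : {set 'I_K.+1}) : bool :=
  [&& in_Ped_od A, #|A| == M & \sum_(i in A) (i : nat) == s].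

Lemma p_ed_odE M s : p_ed_od M s = #|[set A : {set 'I_s.+1} | ped_set M s A]|.
Proof. by []. Qed.

Lemma in_Ped_odP K (A : {set 'I_K.+1}) :
  reflect [/\ forall i, i \in A -> 0 < i,
              forall i j, i \in A -> j \in A -> odd i -> ~~ odd j -> i < j
            & exists2 i, i \in A & odd i]
          (in_Ped_od A).
Proof.
apply: (iffP and3P) => [[h0 /forallP hlt /existsP [i /andP [hi hoi]]] | [h0 hlt [i hi hoi]]].
  split; last by exists i.
  - move=> j hj; rewrite lt0n; apply: contraNneq h0 => j0.
    by rewrite (_ : ord0 = j) //; apply: val_inj.
  - move=> a b ha hb hoa heb.
    by move: (hlt a) => /implyP /(_ ha) /forallP /(_ b) /implyP /(_ hb); rewrite hoa heb.
split.
- by apply/negP => /h0.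
- apply/forallP => a; apply/implyP => ha; apply/forallP => b; apply/implyP => hb.
  by apply/implyP => /andP [hoa heb]; apply: hlt.
- by apply/existsP; exists i; rewrite hi.
Qed.

(* The default index of [extremum] is irrelevant once the predicate is
   satisfiable; this lets us pick extremal parts without carrying a witness. *)
Lemma extremum_default (T : eqType) (I : finType) (ord : rel T) (i0 i1 : I)
    (P : pred I) (F : I -> T) :
  reflexive ord -> transitive ord -> total ord -> P i1 ->
  extremum ord i0 P F = extremum ord i1 P F.
Proof.
move=> refl trans tot Pi1.
have := @extremumP T I ord i1 P F refl trans tot Pi1; rewrite /extremum.
case: pickP => //= hnone [i Pi hmin].
have := hnone i; rewrite /= Pi => /negbT/negP; case.
by apply/forallP => j; apply/implyP => /hmin.
Qed.

Lemma arg_max_default (I : finType) (i0 i1 : I) (P : pred I) (F : I -> nat) :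
  P i1 -> arg_max i0 P F = arg_max i1 P F.
Proof.
apply: extremum_default => [n | n m p hmn hnp | m n]; first exact: leqnn.
  exact: leq_trans hnp hmn.
exact: leq_total.
Qed.

Lemma arg_min_default (I : finType) (i0 i1 : I) (P : pred I) (F : I -> nat) :
  P i1 -> arg_min i0 P F = arg_min i1 P F.
Proof. apply: extremum_default; [exact: leqnn|exact: leq_trans|exact: leq_total]. Qed.

Lemma leq_sum_mem (T : finType) (A : {set T}) (F : T -> nat) i :
  i \in A -> F i <= \sum_(j in A) F j.
Proof. by move=> hi; rewrite (big_setD1 i hi) leq_addr. Qed.

Section Parity.
Variables (T : finType) (F : T -> nat).

Lemma odd_sum_count (A : {set T}) :
  odd (\sum_(i in A) F i) = odd #|[set i in A | odd (F i)]|.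
Proof.
rewrite -sum1_card !(big_morph odd oddD (erefl : odd 0 = false)).
rewrite [LHS]big_mkcond [RHS]big_mkcond; apply: eq_bigr => i _.
by rewrite inE; case: (i \in A); case: odd.
Qed.

Lemma other_odd_part (A : {set T}) x : ~~ odd (\sum_(i in A) F i) ->
  x \in A -> odd (F x) -> exists2 o, o \in A & (o != x) && odd (F o).
Proof.
move=> heven hx hox; set O := [set i in A | odd (F i)].
have hxO : x \in O by rewrite inE hx hox.
have /card_gt0P [o] : 0 < #|O :\ x|.
  rewrite lt0n; apply: contraNneq heven => h0.
  by rewrite odd_sum_count (cardsD1 x) hxO h0.
by rewrite !inE => /and3P [hox' hoA hoo]; exists o; rewrite ?hox'.
Qed.

Lemma even_part (A : {set T}) : odd (\sum_(i in A) F i) -> ~~ odd #|A| ->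
  exists2 y, y \in A & ~~ odd (F y).
Proof.
rewrite odd_sum_count => hodd heven.
have /subsetPn [y hyA hyO] : ~~ (A \subset [set i in A | odd (F i)]).
  apply: contraNN heven => hsub; suff -> : A = [set i in A | odd (F i)] by [].
  by apply/eqP; rewrite eqEsubset hsub; apply/subsetP => i; rewrite inE => /andP [].
by exists y => //; move: hyO; rewrite inE hyA.
Qed.
End Parity.

Section Exchange.
Variable T : finType.
Implicit Types (A : {set T}) (x y : T).

Lemma card_exchange A x y : x \in A -> y \notin A -> #|y |: (A :\ x)| = #|A|.
Proof.
by move=> hx hy; rewrite cardsU1 (cardsD1 x A) hx inE negb_and hy orbT.
Qed.

Lemma sum_exchange A x y (F : T -> nat) : x \in A -> y \notin A ->
  \sum_(i in y |: (A :\ x)) F i + F x = \sum_(i in A) F i + F y.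
Proof.
move=> hx hy; rewrite big_setU1 /=; last by rewrite inE negb_and hy orbT.
by rewrite (big_setD1 x hx) /=; lia.
Qed.

Lemma exchangeK A x y : x \in A -> y \notin A -> x |: ((y |: (A :\ x)) :\ y) = A.
Proof.
move=> hx hy; apply/setP => j; rewrite !inE.
case: (eqVneq j x) => [->|hjx] //=.
by case: (eqVneq j y) => [->|] //=; rewrite (negbTE hy).
Qed.
End Exchange.

Section Widen.
Variables (K L : nat) (hKL : K <= L).

(* Sets of parts of a partition of s <= K can be read in any bound L >= K. *)
Let w : 'I_K.+1 -> 'I_L.+1 := widen_ord (hKL : K.+1 <= L.+1).

Lemma widen_inj : injective w.
Proof. by move=> i j /(congr1 val) /= /val_inj. Qed.

Lemma ped_set_widen M s (A : {set 'I_K.+1}) : ped_set M s (w @: A) = ped_set M s A.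
Proof.
rewrite /ped_set card_imset; last exact: widen_inj.
rewrite big_imset /=; last by move=> ? ? _ _; apply: widen_inj.
congr [&& _, _ & _]; apply/in_Ped_odP/in_Ped_odP => -[h0 hlt [i hi hoi]]; split.
- by move=> j hj; apply: (h0 (w j)); apply: imset_f.
- by move=> a b ha hb; apply: (hlt (w a) (w b)); apply: imset_f.
- by case/imsetP: hi hoi => a ha ->; exists a.
- by move=> _ /imsetP [j hj ->]; apply: h0.
- by move=> _ _ /imsetP [a ha ->] /imsetP [b hb ->]; apply: hlt.
- by exists (w i); first exact: imset_f.
Qed.

Lemma ped_set_widen_range M s (B : {set 'I_L.+1}) : s <= K -> ped_set M s B ->
  B = w @: [set i | w i \in B].
Proof.
move=> hsK /and3P [_ _ /eqP hs]; apply/setP => j; apply/idP/imsetP => [hj|[i]].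
  have hjK : (j : nat) < K.+1 by rewrite ltnS (leq_trans _ hsK) // -hs leq_sum_mem.
  exists (Ordinal hjK); last exact: val_inj.
  by rewrite inE (_ : w _ = j) //; apply: val_inj.
by rewrite inE => hi ->.
Qed.

Lemma card_ped_set_widen M s : s <= K ->
  #|[set A : {set 'I_K.+1} | ped_set M s A]| = #|[set B : {set 'I_L.+1} | ped_set M s B]|.
Proof.
move=> hsK; rewrite -(card_imset _ (imset_inj widen_inj)).
apply: eq_card => B; rewrite inE; apply/imsetP/idP => [[A]|hB].
  by rewrite inE => hA ->; rewrite ped_set_widen.
have eB := ped_set_widen_range hsK hB.
by exists [set i | w i \in B]; rewrite // inE -ped_set_widen -eB.
Qed.

End Widen.

Section OddEvenExchange.
Variable K : nat.
Implicit Types A B : {set 'I_K.+1}.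

(* The largest odd part and the smallest even part (meaningful when they exist). *)
Definition max_odd A : 'I_K.+1 := [arg max_(i > ord0 | (i \in A) && odd i) (i : nat)].
Definition min_even B : 'I_K.+1 := [arg min_(i < ord0 | (i \in B) && ~~ odd i) (i : nat)].

Lemma max_oddP A : (exists2 i, i \in A & odd i) ->
  [/\ max_odd A \in A, odd (max_odd A) & forall j, j \in A -> odd j -> j <= max_odd A].
Proof.
case=> i hi hoi; rewrite /max_odd (arg_max_default _ (i1 := i)) ?hi //.
case: arg_maxnP => [|x /andP [hx hox] hmax]; first by rewrite hi.
by split=> // j hj hoj; apply: hmax; rewrite hj.
Qed.

Lemma min_evenP B : (exists2 i, i \in B & ~~ odd i) ->
  [/\ min_even B \in B, ~~ odd (min_even B) & forall j, j \in B -> ~~ odd j -> min_even B <= j].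
Proof.
case=> i hi hei; rewrite /min_even (arg_min_default _ (i1 := i)) ?hi //.
case: arg_minnP => [|y /andP [hy hey] hmin]; first by rewrite hi.
by split=> // j hj hej; apply: hmin; rewrite hj.
Qed.

Lemma max_oddE A x : x \in A -> odd x -> (forall j, j \in A -> odd j -> j <= x) ->
  max_odd A = x.
Proof.
move=> hx hox hmax; have [hm hom hmm] := max_oddP (ex_intro2 _ _ x hx hox).
by apply/val_inj/eqP; rewrite eqn_leq hmax // hmm.
Qed.

Lemma min_evenE B y : y \in B -> ~~ odd y -> (forall j, j \in B -> ~~ odd j -> y <= j) ->
  min_even B = y.
Proof.
move=> hy hey hmin; have [hm hem hmm] := min_evenP (ex_intro2 _ _ y hy hey).
by apply/val_inj/eqP; rewrite eqn_leq hmin // hmm.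
Qed.

Lemma lower_exchange A x (x' : 'I_K.+1) :
  in_Ped_od A -> x \in A -> odd x -> (forall j, j \in A -> odd j -> j <= x) ->
  (exists2 o, o \in A & (o != x) && odd o) -> (x' : nat) = x.-1 ->
  [/\ x' \notin A, in_Ped_od (x' |: (A :\ x)) & min_even (x' |: (A :\ x)) = x'].
Proof.
move=> /in_Ped_odP [hpos hlt _] hx hox hmax [o ho /andP [hox' hoo]] vx'.
have hbelow a : a \in A -> a != x -> odd a -> (a : nat).+1 < x.
  move=> ha hax hoa; have := hmax a ha hoa.
  have hax' : (a : nat) != x by apply: contraNneq hax => /val_inj ->.
  have hSax : (a : nat).+1 != x by apply: contraTneq hox => <-; rewrite /= hoa.
  lia.
have ho_lt_x := hbelow o ho hox' hoo; have ho_pos := hpos o ho.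
have ex : (x : nat) = x'.+1 by lia.
have hex' : ~~ odd x' by move: hox; rewrite ex.
have hx'A : x' \notin A.
  by apply/negP => /(hlt x x' hx) /(_ hox hex'); rewrite ex; lia.
split=> //.
  apply/in_Ped_odP; split.
  - by move=> j; rewrite !inE => /orP [/eqP -> | /andP [_ /hpos]] //; lia.
  - move=> a b; rewrite !inE => /orP [/eqP -> | /andP [hax ha]]; first by rewrite (negbTE hex').
    move=> /orP [/eqP -> | /andP [_ hb]] hoa heb; last exact: hlt.
    by have := hbelow a ha hax hoa; lia.
  - by exists o; rewrite // !inE hox' ho orbT.
apply: min_evenE => [|//|j]; first by rewrite !inE eqxx.
rewrite !inE => /orP [/eqP -> // | /andP [_ hj] hej].
by have := hlt x j hx hj hox hej; lia.
Qed.

Lemma raise_exchange B y (y' : 'I_K.+1) :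
  in_Ped_od B -> y \in B -> ~~ odd y -> (forall j, j \in B -> ~~ odd j -> y <= j) ->
  (y' : nat) = y.+1 ->
  [/\ y' \notin B, in_Ped_od (y' |: (B :\ y)) & max_odd (y' |: (B :\ y)) = y'].
Proof.
move=> /in_Ped_odP [hpos hlt _] hy hey hmin vy'.
have hoy' : odd y' by rewrite vy' /= hey.
have habove b : b \in B -> b != y -> ~~ odd b -> (y : nat).+1 < b.
  move=> hb hby heb; have := hmin b hb heb.
  have hby' : (b : nat) != y by apply: contraNneq hby => /val_inj ->.
  have hSyb : (y : nat).+1 != b by apply: contraNneq heb => <-; rewrite /= hey.
  lia.
have hy'B : y' \notin B.
  by apply/negP => /(hlt y' y) /(_ hy hoy' hey); rewrite vy'; lia.
split=> //.
  apply/in_Ped_odP; split.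
  - by move=> j; rewrite !inE => /orP [/eqP -> | /andP [_ /hpos]] //; rewrite vy'.
  - move=> a b ha; rewrite !inE => /orP [/eqP -> | /andP [hby hb]]; first by rewrite hoy'.
    move=> hoa heb; have := habove b hb hby heb.
    move: ha; rewrite !inE => /orP [/eqP -> | /andP [_ ha]]; first by rewrite vy'.
    by have := hlt a b ha hb hoa heb; lia.
  - by exists y'; rewrite // !inE eqxx.
apply: max_oddE => [|//|j]; first by rewrite !inE eqxx.
rewrite !inE => /orP [/eqP -> // | /andP [_ hj] hoj].
by have := hlt j y hj hy hoj hey; rewrite vy'; lia.
Qed.

Definition lower A : {set 'I_K.+1} := inord (max_odd A).-1 |: (A :\ max_odd A).
Definition raise B : {set 'I_K.+1} := inord (min_even B).+1 |: (B :\ min_even B).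

Lemma lowerP M s A : odd s -> ped_set M s.+1 A -> ped_set M s (lower A) /\ raise (lower A) = A.
Proof.
move=> hs /and3P [hA /eqP hcard /eqP hsum]; rewrite /lower.
have /in_Ped_odP [_ _ hodd] := hA.
have [hx hox hmax] := max_oddP hodd.
set x := max_odd A in hx hox hmax *; clearbody x.
have heven : ~~ odd (\sum_(i in A) (i : nat)) by rewrite hsum /= negbK.
have hx0 : 0 < x by case: (x : nat) hox.
have vx' : (inord x.-1 : 'I_K.+1) = x.-1 :> nat by rewrite inordK // (leq_ltn_trans (leq_pred _)).
have [hx'A hped hmin] := lower_exchange hA hx hox hmax (other_odd_part heven hx hox) vx'.
split.
  apply/and3P; split=> //; first by rewrite card_exchange // hcard.
  by rewrite -(eqn_add2r x) sum_exchange // hsum vx' addSnnS prednK //.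
rewrite /raise hmin (_ : inord _ = x) ?exchangeK //.
by apply: val_inj; rewrite /= vx' prednK // inordK.
Qed.

Lemma raiseP M s B : ~~ odd M -> odd s -> s < K -> ped_set M s B ->
  ped_set M s.+1 (raise B) /\ lower (raise B) = B.
Proof.
move=> hM hs hsK /and3P [hB /eqP hcard /eqP hsum]; rewrite /raise.
have hodd_sum : odd (\sum_(i in B) (i : nat)) by rewrite hsum.
have heven_card : ~~ odd #|B| by rewrite hcard.
have [hy hey hmin] := min_evenP (even_part hodd_sum heven_card).
set y := min_even B in hy hey hmin *; clearbody y.
have hyK : (y : nat).+1 < K.+1 by rewrite ltnS (leq_ltn_trans _ hsK) // -hsum leq_sum_mem.
have vy' : (inord y.+1 : 'I_K.+1) = y.+1 :> nat by rewrite inordK.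
have [hy'B hped hmax] := raise_exchange hB hy hey hmin vy'.
split.
  apply/and3P; split=> //; first by rewrite card_exchange // hcard.
  by rewrite -(eqn_add2r y) sum_exchange // hsum vy' addnS.
rewrite /lower hmax (_ : inord _ = y) ?exchangeK //.
by apply: val_inj; rewrite /= vy' inordK // ltnW.
Qed.

Lemma card_ped_set_succ M s : ~~ odd M -> odd s -> s < K ->
  #|[set A : {set 'I_K.+1} | ped_set M s.+1 A]| = #|[set B : {set 'I_K.+1} | ped_set M s B]|.
Proof.
move=> hM hs hsK.
have -> : [set B | ped_set M s B] = lower @: [set A | ped_set M s.+1 A].
  apply/setP => B; rewrite inE; apply/idP/imsetP => [hB | [A]].
    have [hA hK] := raiseP hM hs hsK hB.
    by exists (raise B); rewrite ?inE // hK.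
  by rewrite inE => hA ->; case: (lowerP hs hA).
apply/esym/card_in_imset => A1 A2; rewrite !inE => h1 h2 e.
by rewrite -(lowerP hs h1).2 e (lowerP hs h2).2.
Qed.
End OddEvenExchange.

Theorem mainTheorem7 (m n : nat) (hm : 1 <= m) (hn : 1 <= n) :
  p_ed_od (2 * m) (2 * n) = p_ed_od (2 * m) (2 * n - 1).
Proof.
have hM : ~~ odd (2 * m) by rewrite mul2n odd_double.
set s := 2 * n - 1.
have -> : 2 * n = s.+1 by rewrite /s; lia.
have hs : odd s by rewrite /s (_ : 2 * n - 1 = (n.-1).*2.+1) ?oddS ?odd_double //; lia.
rewrite !p_ed_odE (card_ped_set_widen (leqnSn s)) //.
exact: card_ped_set_succ hM hs (ltnSn s).
Qed.
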